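(* Let $G=(V,E)$ be a symmetric tree topology and let sets $R,S$ with $|R|=|S|=N/2$ be initially partitioned among the compute nodes, with $N_v$ the number of elements of $R$ and $S$ held by compute node $v$. Any algorithm computing the cartesian product $R\times S$ has (tuple) cost $\Omega(C_{LB})$, where \[C_{LB}=\max_{e\in E}\frac{1}{w_e}\cdot\min\Big\{\sum_{v\in V_e^-}N_v,\ \sum_{v\in V_e^+}N_v\Big\}.\]
   Context: Topology-aware model: the network is a directed graph $G=(V,E)$; each edge $e$ has bandwidth $w_e>0$; $V_C\subseteq V$ are the compute nodes (only they store data and compute; other nodes only route). $G$ is a symmetric tree topology: for every $(u,v)\in E$ also $(v,u)\in E$ with the same bandwidth, and the underlying undirected graph is a tree. The input is partitioned without duplication among the compute nodes; the algorithm knows the topology, bandwidths and local fragment sizes. Computation proceeds in synchronous rounds; in each round compute nodes compute locally and send data along paths. The tuple cost of round $i$ is $\max_e|Y_i(e)|/w_e$ where $|Y_i(e)|$ is the number of elements routed through edge $e$ in round $i$; the total cost is the sum over rounds. For an edge $e=(u,v)$, removing $e$ splits the compute nodes into $V_e^-$ (on $u$'s side) and $V_e^+$ (on $v$'s side). Computing $R\times S$ means every pair $(r,s)$ with $r\in R,s\in S$ is emitted by at least one compute node, which must hold both $r$ and $s$ at that time. *)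

From HB Require Import structures.
From mathcomp Require Import all_boot all_order all_algebra.
From mathcomp Require Import reals.
From Stdlib Require List.
Set Implicit Arguments. Unset Strict Implicit. Unset Printing Implicit Defensive.
Import Order.TTheory GRing.Theory Num.Theory.

Definition acyclic (V : finType) (E : rel V) : Prop :=
  ~ (exists (x : V) (p : seq V),
        [&& path E x p, E (last x p) x, uniq (x :: p) & 2 < size (x :: p)]).

Definition sym_tree (V : finType) (E : rel V) : Prop :=
  [/\ symmetric E, irreflexive E, (forall x y : V, connect E x y) & acyclic E].

Definition rel_minus (V : finType) (E : rel V) (u v : V) : rel V :=
  [rel x y | E x y && ~~ (((x == u) && (y == v)) || ((x == v) && (y == u)))].

Definition side_minus (V : finType) (E : rel V) (VC : {set V}) (u v : V) : {set V} :=
  [set c in VC | connect (rel_minus E u v) c u].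
Definition side_plus (V : finType) (E : rel V) (VC : {set V}) (u v : V) : {set V} :=
  [set c in VC | connect (rel_minus E u v) c v].

Definition item (TR TS : finType) := (TR + TS)%type.

Definition in_data (TR TS : finType) (R : {set TR}) (S : {set TS}) (d : item TR TS) : bool :=
  match d with inl r => r \in R | inr s => s \in S end.

Definition init_loc (V TR TS : finType) (locR : TR -> V) (locS : TS -> V) (d : item TR TS) : V :=
  match d with inl r => locR r | inr s => locS s end.

Definition Nv (V TR TS : finType) (R : {set TR}) (S : {set TS})
  (locR : TR -> V) (locS : TS -> V) (v : V) : nat :=
  #|[set r in R | locR r == v]| + #|[set s in S | locS s == v]|.

(* a message: source compute node, destination compute node, the element sent,
   and the route src :: route (a walk in the graph ending at dst). *)
Record msg (V D : Type) := Msg { src : V; dst : V; dat : D; route : seq V }.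

Definition round (V D : Type) := seq (msg V D).

Fixpoint holds (V TR TS : finType) (R : {set TR}) (S : {set TS})
  (locR : TR -> V) (locS : TS -> V) (A : seq (round V (item TR TS)))
  (k : nat) (v : V) (d : item TR TS) : bool :=
  match k with
  | 0 => in_data R S d && (init_loc locR locS d == v)
  | k'.+1 => holds R S locR locS A k' v d
             || has (fun m => (dst m == v) && (dat m == d)) (nth [::] A k')
  end.

Definition valid_alg (V TR TS : finType) (E : rel V) (VC : {set V})
  (R : {set TR}) (S : {set TS}) (locR : TR -> V) (locS : TS -> V)
  (A : seq (round V (item TR TS))) : Prop :=
  forall k, k < size A -> forall m, List.In m (nth [::] A k) ->
    [/\ src m \in VC, dst m \in VC, holds R S locR locS A k (src m) (dat m),
        path E (src m) (route m) & last (src m) (route m) = dst m].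

Definition computes_product (V TR TS : finType) (VC : {set V})
  (R : {set TR}) (S : {set TS}) (locR : TR -> V) (locS : TS -> V)
  (A : seq (round V (item TR TS))) : Prop :=
  forall r s, r \in R -> s \in S ->
    exists v k, [/\ v \in VC, k <= size A,
                    holds R S locR locS A k v (inl r) & holds R S locR locS A k v (inr s)].

Definition crosses (V D : eqType) (m : msg V D) (e : V * V) : bool :=
  e \in zip (src m :: route m) (route m).

Definition Y (V TR TS : finType) (rd : round V (item TR TS)) (e : V * V) : {set item TR TS} :=
  [set d | has (fun m => (dat m == d) && crosses m e) rd].

Local Open Scope ring_scope.

Definition cost (K : realType) (V TR TS : finType) (E : rel V) (w : V -> V -> K)
  (A : seq (round V (item TR TS))) : K :=
  \sum_(i < size A)
     \big[Num.max/0]_(e : V * V | E e.1 e.2) ((#|Y (nth [::] A i) e|)%:R / w e.1 e.2).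

Definition C_LB (K : realType) (V TR TS : finType) (E : rel V) (w : V -> V -> K)
  (VC : {set V}) (R : {set TR}) (S : {set TS}) (locR : TR -> V) (locS : TS -> V) : K :=
  \big[Num.max/0]_(e : V * V | E e.1 e.2)
     ((w e.1 e.2)^-1 *
      Num.min (\sum_(v in side_minus E VC e.1 e.2) (Nv R S locR locS v)%:R)
              (\sum_(v in side_plus E VC e.1 e.2) (Nv R S locR locS v)%:R)).

From HB Require Import structures.
From mathcomp Require Import all_boot all_order all_algebra.
From mathcomp Require Import reals.
From mathcomp Require Import zify lra.
Import Order.TTheory GRing.Theory Num.Theory.
Set Implicit Arguments.

(* Fix a tree edge {u, v}. Deleting it splits the vertices into u's side and
   v's side, and a walk can only pass from one side to the other through the
   edge. Hence an element that is never routed through the edge stays on its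
   initial side, so when r in R and s in S start on different sides one of
   them must cross for (r, s) to be emitted. Therefore either all of R on one
   side crosses or all of S on the other side does; using this for both
   orientations and |R| = |S|, at least half of the smaller side load crosses
   the edge. Every crossing element is counted in some Y_i(u, v) or
   Y_i(v, u), and |Y_i(e)| <= w_e * (cost of round i), so C_LB <= 4 * cost. *)

Section EdgeCut.
Variables (V : finType) (E : rel V) (u v : V).
Hypothesis Esym : symmetric E.
Local Notation cut := (rel_minus E u v).

Lemma rel_minus_sym : symmetric cut.
Proof.
move=> x y; rewrite /rel_minus /= Esym.
by rewrite [(y == u) && _]andbC [(y == v) && _]andbC orbC.
Qed.

Lemma connect_rel_minus_sym : connect_sym cut.
Proof. exact: sym_connect_sym rel_minus_sym. Qed.

Lemma path_rel_minus x p : path E x p ->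
  (u, v) \notin zip (x :: p) p -> (v, u) \notin zip (x :: p) p -> path cut x p.
Proof.
elim: p x => [//|y p IH] x /= /andP[Exy Ep].
rewrite !in_cons !negb_or => /andP[xy_uv uv_p] /andP[xy_vu vu_p].
rewrite IH // andbT /rel_minus /= Exy /=.
by apply/negP => /orP[] /andP[/eqP xu /eqP yv]; subst;
  rewrite eqxx in xy_uv xy_vu.
Qed.

Lemma connect_rel_minus_endpoint x :
  connect E x u -> connect cut x u || connect cut x v.
Proof.
case/connectP => p; elim: p x => [|y p IH] x /=; first by move=> _ ->; rewrite connect0.
case/andP=> Exy Ep /(IH y Ep) y_side.
case cut_xy: (cut x y).
  by case/orP: y_side => y_side; rewrite (connect_trans (connect1 cut_xy) y_side) ?orbT.
move: cut_xy; rewrite /rel_minus /= Exy /= => /negbFE.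
by case/orP=> /andP[/eqP -> _]; rewrite connect0 ?orbT.
Qed.

Hypotheses (Eirr : irreflexive E) (Eacy : acyclic E) (Euv : E u v).

Lemma tree_edge_cut : ~~ connect cut u v.
Proof.
apply/negP; case/connectP => p cut_p v_last.
case/shortenP: cut_p v_last => q cut_q uniq_q _ v_last.
apply: Eacy; exists u, q.
have E_q : path E u q by apply: sub_path cut_q => a b /andP[].
rewrite E_q -v_last Esym Euv uniq_q /=.
case: q cut_q v_last {uniq_q E_q} => [|z [|z' q]] //=.
- by move=> _ vu; move: Euv; rewrite -vu Eirr.
- by move=> /andP[cut_uz _] zv; move: cut_uz; rewrite -zv /rel_minus /= !eqxx andbF.
Qed.

Lemma sides_disjoint x : connect cut x u -> connect cut x v -> False.
Proof.
move=> xu xv; move/negP: tree_edge_cut; apply.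
by apply: connect_trans xv; rewrite connect_rel_minus_sym.
Qed.

End EdgeCut.

Lemma has_InP (T : Type) (p : pred T) (s : seq T) :
  reflect (exists2 m, List.In m s & p m) (has p s).
Proof.
elim: s => [|a s IH] /=; first by right; case.
case pa: (p a) => /=; first by left; exists a => //; left.
apply: (iffP IH) => [[m sm pm] | [m [<- | sm] pm]]; [by exists m; first right | | by exists m].
by rewrite pm in pa.
Qed.

Lemma card_inl_inr (T1 T2 : finType) (P : {set T1}) (Q : {set T2}) :
  #|(@inl T1 T2) @: P :|: inr @: Q| = #|P| + #|Q|.
Proof.
rewrite -(card_imset P (@inl_inj T1 T2)) -(card_imset Q (@inr_inj T1 T2)).
apply/eqP; rewrite (leq_card_setU _ _).2.
by apply/pred0P => d /=; apply/andP => -[/imsetP[a _ ->] /imsetP[b _]].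
Qed.

Lemma sum_card_fibers (I T : finType) (P : {set I}) (B : {set T}) (f : T -> I) :
  \sum_(x in P) #|[set r in B | f r == x]| = #|[set r in B | f r \in P]|.
Proof.
rewrite -sum1_card (partition_big f (mem P)) /=; last first.
  by move=> r; rewrite inE => /andP[].
apply: eq_bigr => x Px; rewrite -sum1_card; apply: eq_bigl => r.
by rewrite !inE; case: eqP => [->|]; rewrite ?Px ?andbT ?andbF.
Qed.

Section Cost.
Local Open Scope ring_scope.
Context {K : realType} {V : finType} {E : rel V} (w : V -> V -> K).
Context {TR TS : finType} (A : seq (round V (item TR TS))).
Hypothesis w_gt0 : forall x y, E x y -> 0 < w x y.

Lemma cost_ge0 : 0 <= cost E w A.
Proof.
apply: sumr_ge0 => i _; elim/big_ind: _ => // [x y x_ge0 y_ge0|e Ee].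
  by rewrite le_max x_ge0.
by rewrite divr_ge0 // ltW // w_gt0.
Qed.

Lemma traffic_le_cost x y : E x y ->
  \sum_(i < size A) #|Y (nth [::] A i) (x, y)|%:R / w x y <= cost E w A.
Proof.
by move=> Exy; apply: ler_sum => i _; rewrite (bigD1 (x, y)) //= le_max lexx.
Qed.

End Cost.

Section Execution.
Variables (V : finType) (E : rel V) (VC : {set V}) (TR TS : finType).
Variables (R : {set TR}) (S : {set TS}) (locR : TR -> V) (locS : TS -> V).
Variables (A : seq (round V (item TR TS))) (u v : V).
Local Notation cut := (rel_minus E u v).
Local Notation holds := (holds R S locR locS A).

Definition crosses_edge (d : item TR TS) : bool :=
  [exists i : 'I_(size A),
     (d \in Y (nth [::] A i) (u, v)) || (d \in Y (nth [::] A i) (v, u))].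

Definition crossing := [set d | crosses_edge d].

Definition side_R (t : V) := [set r in R | connect cut (locR r) t].
Definition side_S (t : V) := [set s in S | connect cut (locS s) t].

Lemma crossing_card_le_traffic :
  #|crossing| <= \sum_(i < size A) (#|Y (nth [::] A i) (u, v)| + #|Y (nth [::] A i) (v, u)|).
Proof.
pose traffic i := Y (nth [::] A i) (u, v) :|: Y (nth [::] A i) (v, u).
apply: leq_trans (subset_leq_card (B := \bigcup_(i < size A) traffic i) _) _.
  apply/subsetP => d; rewrite inE => /existsP[i d_i].
  by apply/bigcupP; exists i; rewrite // inE.
elim/big_ind2: _ => [|n1 B1 n2 B2 B1n1 B2n2|i _]; first by rewrite cards0.
  exact: leq_trans (leq_card_setU B1 B2).1 (leq_add B1n1 B2n2).
exact: (leq_card_setU _ _).1.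
Qed.

Hypothesis Esym : symmetric E.
Hypothesis valid : valid_alg E VC R S locR locS A.

Lemma holds_cut_side d t :
  (in_data R S d -> connect cut (init_loc locR locS d) t) -> ~~ crosses_edge d ->
  forall k x, holds k x d -> connect cut x t.
Proof.
move=> d_init no_cross; elim=> [|k IH] x /=; first by case/andP=> /d_init + /eqP <-.
case/orP; first exact: IH.
case/has_InP => m m_in /andP[/eqP <- /eqP d_m].
have k_lt : k < size A by rewrite ltnNge; apply: contraPN m_in => /(nth_default [::]) ->.
have [_ _ src_holds E_route last_route] := @valid k k_lt m m_in.
rewrite d_m in src_holds; rewrite -last_route.
apply: connect_trans (IH _ src_holds); rewrite connect_rel_minus_sym //.
apply/connectP; exists (route m) => //; apply: path_rel_minus => //;
  apply: contraNN no_cross => m_cross; apply/existsP; exists (Ordinal k_lt);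
  rewrite !inE; apply/orP; [left | right];
  by apply/has_InP; exists m; rewrite // d_m eqxx.
Qed.

Hypothesis prod : computes_product VC R S locR locS A.

Lemma side_crossing a b : (forall x, connect cut x a -> connect cut x b -> False) ->
  {in side_R a, forall r, crosses_edge (inl r)} \/
  {in side_S b, forall s, crosses_edge (inr s)}.
Proof.
move=> ab_disj; case: (boolP [forall r in side_R a, crosses_edge (inl r)]).
  by move/forall_inP; left.
case/forall_inPn => r; rewrite inE => /andP[rR ra] r_stays; right.
move=> s; rewrite inE => /andP[sS sb]; apply: contraT => s_stays.
have [x [k [_ _ x_r x_s]]] := prod rR sS.
by case: (ab_disj x (@holds_cut_side (inl r) a (fun _ => ra) r_stays k x x_r)
                (@holds_cut_side (inr s) b (fun _ => sb) s_stays k x x_s)).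
Qed.

Lemma crossing_card (P : {set TR}) (Q : {set TS}) :
  {in P, forall r, crosses_edge (inl r)} -> {in Q, forall s, crosses_edge (inr s)} ->
  #|P| + #|Q| <= #|crossing|.
Proof.
move=> P_cross Q_cross; rewrite -card_inl_inr; apply: subset_leq_card.
by apply/subsetP => d; rewrite !inE; case/orP=> /imsetP[a /[swap] ->];
  [exact: P_cross | exact: Q_cross].
Qed.

Hypotheses (Eirr : irreflexive E) (Eacy : acyclic E) (Euv : E u v).
Hypotheses (Econ : forall x y, connect E x y) (RS : #|R| = #|S|).

Lemma min_side_load_le :
  minn (#|side_R u| + #|side_S u|) (#|side_R v| + #|side_S v|) <= 2 * #|crossing|.
Proof.
have side_le (T : finType) (B : {set T}) (P : pred T) : #|[set x in B | P x]| <= #|B|.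
  by apply: subset_leq_card; apply/subsetP => x; rewrite inE => /andP[].
have cover (T : finType) (B : {set T}) (loc : T -> V) :
    B \subset [set x in B | connect cut (loc x) u] :|: [set x in B | connect cut (loc x) v].
  by apply/subsetP => x xB; rewrite !inE xB connect_rel_minus_endpoint ?Econ.
have uv_disj := sides_disjoint u v Esym Eirr Eacy Euv.
have [Ru|Sv] := side_crossing u v uv_disj;
have [Rv|Su] := side_crossing v u (fun x xv xu => uv_disj x xu xv).
- have : #|R| + #|set0 : {set TS}| <= #|crossing|.
    apply: crossing_card => [r /(subsetP (cover _ R locR))|s]; last by rewrite inE.
    by rewrite inE => /orP[/Ru|/Rv].
  have := side_le _ R (fun r => connect cut (locR r) u).
  have := side_le _ S (fun s => connect cut (locS s) u).
  rewrite cards0 /side_R /side_S; lia.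
- have := crossing_card Ru Su; lia.
- have := crossing_card Rv Sv; lia.
- have : #|set0 : {set TR}| + #|S| <= #|crossing|.
    apply: crossing_card => [r|s /(subsetP (cover _ S locS))]; first by rewrite inE.
    by rewrite inE => /orP[/Su|/Sv].
  have := side_le _ R (fun r => connect cut (locR r) u).
  have := side_le _ S (fun s => connect cut (locS s) u).
  rewrite cards0 /side_R /side_S; lia.
Qed.

Hypothesis R_VC : forall r, r \in R -> locR r \in VC.
Hypothesis S_VC : forall s, s \in S -> locS s \in VC.

Lemma sum_Nv_side t :
  \sum_(x in [set c in VC | connect cut c t]) Nv R S locR locS x = #|side_R t| + #|side_S t|.
Proof.
rewrite big_split /= !sum_card_fibers; congr (_ + _); apply: eq_card => d; rewrite !inE.
- by case dR: (d \in R); rewrite //= R_VC.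
- by case dS: (d \in S); rewrite //= S_VC.
Qed.

Local Open Scope ring_scope.
Variables (K : realType) (w : V -> V -> K).
Hypothesis w_pos : forall x y, E x y -> 0 < w x y /\ w x y = w y x.

Lemma edge_load_le_cost :
  (w u v)^-1 * Num.min (\sum_(x in side_minus E VC u v) (Nv R S locR locS x)%:R)
                       (\sum_(x in side_plus E VC u v) (Nv R S locR locS x)%:R)
  <= 4 * cost E w A.
Proof.
have [w_gt0 w_sym] := w_pos Euv.
rewrite /side_minus /side_plus -!natr_sum !sum_Nv_side -natr_min minEnat.
pose traffic e := \sum_(i < size A) #|Y (nth [::] A i) e|%:R / w u v.
apply: (@le_trans _ _ (2 * (traffic (u, v) + traffic (v, u)))).
  have -> : traffic (u, v) + traffic (v, u) = (w u v)^-1 *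
      (\sum_(i < size A) (#|Y (nth [::] A i) (u, v)| + #|Y (nth [::] A i) (v, u)|))%:R.
    rewrite natr_sum mulr_sumr -big_split; apply: eq_bigr => i _.
    by rewrite natrD mulrDr ![_^-1 * _]mulrC.
  rewrite mulrCA ler_pM2l ?invr_gt0 // -natrM ler_nat.
  exact: leq_trans min_side_load_le (leq_mul (leqnn 2) crossing_card_le_traffic).
have uv_le := traffic_le_cost w A u v Euv.
have vu_le := traffic_le_cost w A v u (etrans (Esym v u) Euv).
rewrite -w_sym in vu_le; rewrite /traffic; lra.
Qed.

End Execution.

Local Open Scope ring_scope.

Theorem theorem3 (K : realType) :
  exists c : K, 0 < c /\
  forall (V : finType) (E : rel V) (w : V -> V -> K) (VC : {set V})
         (TR TS : finType) (R : {set TR}) (S : {set TS})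
         (locR : TR -> V) (locS : TS -> V)
         (A : seq (round V (item TR TS))),
    sym_tree E ->
    (forall x y, E x y -> 0 < w x y /\ w x y = w y x) ->
    #|R| = #|S| ->
    (forall r, r \in R -> locR r \in VC) ->
    (forall s, s \in S -> locS s \in VC) ->
    valid_alg E VC R S locR locS A ->
    computes_product VC R S locR locS A ->
    c * C_LB E w VC R S locR locS <= cost E w A.
Proof.
exists 4^-1; split; first by rewrite invr_gt0 ltr0n.
move=> V E w VC TR TS R S locR locS A [Esym Eirr Econ Eacy] w_pos RS R_VC S_VC valid prod.
rewrite ler_pdivrMl ?ltr0n //.
have w_gt0 x y (Exy : E x y) : 0 < w x y := (w_pos x y Exy).1.
rewrite /C_LB; elim/big_ind: _ => [|x y|[u v] /= Euv].
- by rewrite mulr_ge0 // (cost_ge0 w A w_gt0).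
- by rewrite ge_max => -> ->.
- exact: edge_load_le_cost.
Qed.
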